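(* Let $C>0$, $\mathbf{w}^t\in\mathbb{R}^d$, let $\theta_1^t\le\dots\le\theta_{K-1}^t$ be real thresholds, $\mathbf{x}^t\in\mathbb{R}^d$ and integers $1\le y_l^t\le y_r^t\le K$; let $I_t=\{1,\dots,y_l^t-1\}\cup\{y_r^t,\dots,K-1\}$. Let $(\mathbf{w}^{t+1},\boldsymbol\theta^{t+1})$ be the PA-I update, i.e. the $(\mathbf{w},\boldsymbol\theta)$-part of the minimizer over $\mathbf{w}\in\mathbb{R}^d$, $\boldsymbol\theta\in\mathbb{R}^{K-1}$, $(\xi_i)_{i\in I_t}$ of $$\tfrac12\Vert\mathbf{w}-\mathbf{w}^t\Vert^2+\tfrac12\Vert\boldsymbol\theta-\boldsymbol\theta^t\Vert^2+C\sum_{i\in I_t}\xi_i$$ subject to $\mathbf{w}\cdot\mathbf{x}^t-\theta_i\ge 1-\xi_i$ for $i=1,\dots,y_l^t-1$, $\mathbf{w}\cdot\mathbf{x}^t-\theta_i\le -1+\xi_i$ for $i=y_r^t,\dots,K-1$, and $\xi_i\ge 0$ for $i\in I_t$. Then $\theta_1^{t+1}\le\theta_2^{t+1}\le\dots\le\theta_{K-1}^{t+1}$.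
   Context: Online ranking into $K$ ordered classes with interval labels $[y_l^t,y_r^t]$: a ranker is $(\mathbf{w},\boldsymbol\theta)$, $\boldsymbol\theta=(\theta_1,\dots,\theta_{K-1})$, predicting $\min\{i:\mathbf{w}\cdot\mathbf{x}-\theta_i<0\}$ with $\theta_K=\infty$. PA-I is the passive-aggressive variant with aggressiveness parameter $C$ that at each trial computes the exact solution of the stated convex program. *)

From HB Require Import structures.
From mathcomp Require Import all_boot all_order all_algebra.
From mathcomp Require Import reals.
Set Implicit Arguments. Unset Strict Implicit. Unset Printing Implicit Defensive.
Import Order.TTheory GRing.Theory Num.Theory.
Local Open Scope ring_scope.

(* Thresholds theta_1..theta_{K-1} are represented by th : 'I_(K-1) -> R,
   with th i standing for theta_{i+1} (0-based ordinal i). *)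

Definition dotv (R : realType) (d : nat) (u v : 'I_d -> R) : R :=
  \sum_(j < d) u j * v j.

Definition sqdist (R : realType) (n : nat) (u v : 'I_n -> R) : R :=
  \sum_(j < n) (u j - v j) ^+ 2.

(* membership of (0-based) index i in I_t = {1..yl-1} u {yr..K-1}
   (1-based): theta_{i+1} with i+1 < yl (left) or yr <= i+1 (right) *)
Definition in_left (yl : nat) (K : nat) (i : 'I_(K - 1)) : bool := (i.+1 < yl)%N.
Definition in_right (yr : nat) (K : nat) (i : 'I_(K - 1)) : bool := (yr <= i.+1)%N.
Definition in_It (yl yr K : nat) (i : 'I_(K - 1)) : bool :=
  in_left yl i || in_right yr i.

Definition paI_obj (R : realType) (d K : nat) (C : R) (yl yr : nat)
  (wt : 'I_d -> R) (tht : 'I_(K - 1) -> R)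
  (w : 'I_d -> R) (th : 'I_(K - 1) -> R) (xi : 'I_(K - 1) -> R) : R :=
  2^-1 * sqdist w wt + 2^-1 * sqdist th tht
  + C * \sum_(i < K - 1 | in_It yl yr i) xi i.

Definition paI_feasible (R : realType) (d K : nat) (yl yr : nat)
  (x : 'I_d -> R) (w : 'I_d -> R) (th : 'I_(K - 1) -> R)
  (xi : 'I_(K - 1) -> R) : Prop :=
  (forall i : 'I_(K - 1), in_left yl i -> dotv w x - th i >= 1 - xi i) /\
  (forall i : 'I_(K - 1), in_right yr i -> dotv w x - th i <= -1 + xi i) /\
  (forall i : 'I_(K - 1), in_It yl yr i -> 0 <= xi i).

Definition paI_minimizer (R : realType) (d K : nat) (C : R) (yl yr : nat)
  (wt : 'I_d -> R) (tht : 'I_(K - 1) -> R) (x : 'I_d -> R)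
  (w : 'I_d -> R) (th : 'I_(K - 1) -> R) (xi : 'I_(K - 1) -> R) : Prop :=
  paI_feasible yl yr x w th xi /\
  forall (w' : 'I_d -> R) (th' : 'I_(K - 1) -> R) (xi' : 'I_(K - 1) -> R),
    paI_feasible yl yr x w' th' xi' ->
    paI_obj C yl yr wt tht w th xi <= paI_obj C yl yr wt tht w' th' xi'.

From HB Require Import structures.
From mathcomp Require Import all_boot all_order all_algebra.
From mathcomp Require Import reals.
From mathcomp Require Import zify lra.
Set Implicit Arguments. Unset Strict Implicit. Unset Printing Implicit Defensive.
Import Order.TTheory GRing.Theory Num.Theory.
Local Open Scope ring_scope.

(* If the minimizer had theta_i > theta_j for some i < j, replacing both
   thresholds by their mean (and, when i and j lie on the same side of I_t,
   also both slacks by their mean) would keep the point feasible and the slack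
   term unchanged, while strictly decreasing the distance to the ordered
   thresholds theta^t: averaging a reversed pair moves it towards an ordered
   target. *)

Lemma bigD2 (R : Type) (idx : R) (op : Monoid.com_law idx) (I : finType)
    (P : pred I) (F : I -> R) (i j : I) :
  i != j -> P i -> P j ->
  \big[op/idx]_(k | P k) F k =
    op (F i) (op (F j) (\big[op/idx]_(k | P k && (k != i) && (k != j)) F k)).
Proof.
by move=> ij Pi Pj; rewrite (bigD1 i) // (bigD1 j) //= Pj eq_sym.
Qed.

Definition avg2 (R : numFieldType) (I : eqType) (i j : I) (f : I -> R) :
    I -> R :=
  fun k => if (k == i) || (k == j) then (f i + f j) / 2 else f k.

Section Avg2.
Variables (R : numFieldType) (I : eqType) (i j : I) (f : I -> R).

Lemma avg2_l : avg2 i j f i = (f i + f j) / 2.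
Proof. by rewrite /avg2 eqxx. Qed.

Lemma avg2_r : avg2 i j f j = (f i + f j) / 2.
Proof. by rewrite /avg2 eqxx orbT. Qed.

Lemma avg2_other k : k != i -> k != j -> avg2 i j f k = f k.
Proof. by rewrite /avg2 => /negbTE-> /negbTE->. Qed.

End Avg2.

Lemma sum_avg2 (R : numFieldType) (I : finType) (P : pred I) (f : I -> R)
    (i j : I) :
  i != j -> P i = P j -> \sum_(k | P k) avg2 i j f k = \sum_(k | P k) f k.
Proof.
move=> ij PiPj; have [Pi|nPi] := boolP (P i); last first.
  have nPj : ~~ P j by rewrite -PiPj.
  by apply: eq_bigr => k Pk; rewrite avg2_other //; apply: contraTneq Pk => ->.
have Pj : P j by rewrite -PiPj.
rewrite !(bigD2 _ _ ij Pi Pj) /= avg2_l avg2_r !addrA -splitr.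
congr (_ + _); apply: eq_bigr => k /andP [/andP [_ ki] kj].
exact: avg2_other.
Qed.

(* The gap is (a - b)^2 / 2 + (a - b) (t - s). *)
Lemma mean_sq_lt (R : realFieldType) (a b s t : R) :
  b < a -> s <= t ->
  ((a + b) / 2 - s) ^+ 2 + ((a + b) / 2 - t) ^+ 2 < (a - s) ^+ 2 + (b - t) ^+ 2.
Proof.
move=> ba st; have : 0 <= (a - b) * (t - s) by apply: mulr_ge0; lra.
nra.
Qed.

Lemma sqdist_avg2_lt (R : realType) (n : nat) (f g : 'I_n -> R) (i j : 'I_n) :
  i != j -> f j < f i -> g i <= g j -> sqdist (avg2 i j f) g < sqdist f g.
Proof.
move=> ij fji gij; rewrite /sqdist.
rewrite (bigD2 _ _ ij) // [X in _ < X](bigD2 _ _ ij) //= avg2_l avg2_r !addrA.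
rewrite (eq_bigr (fun k => (f k - g k) ^+ 2)) ?ltrD2r ?mean_sq_lt //.
by move=> k /andP [ki kj]; rewrite avg2_other.
Qed.

Lemma in_left_le (yl K : nat) (i j : 'I_(K - 1)) :
  (i <= j)%N -> in_left yl j -> in_left yl i.
Proof. by rewrite /in_left; lia. Qed.

Lemma in_right_le (yr K : nat) (i j : 'I_(K - 1)) :
  (i <= j)%N -> in_right yr i -> in_right yr j.
Proof. by rewrite /in_right; lia. Qed.

Lemma in_left_notin_right (yl yr K : nat) (k : 'I_(K - 1)) :
  (yl <= yr)%N -> in_left yl k -> ~~ in_right yr k.
Proof. by rewrite /in_left /in_right; lia. Qed.

Definition same_side (yl yr K : nat) (i j : 'I_(K - 1)) : bool :=
  (in_left yl i && in_left yl j) || (in_right yr i && in_right yr j).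

Lemma same_side_in_It (yl yr K : nat) (i j : 'I_(K - 1)) :
  same_side yl yr i j -> in_It yl yr i && in_It yl yr j.
Proof. by rewrite /in_It => /orP [] /andP [-> ->]; rewrite ?orbT. Qed.

Definition avg2_slack (R : numFieldType) (yl yr K : nat) (i j : 'I_(K - 1))
    (xi : 'I_(K - 1) -> R) : 'I_(K - 1) -> R :=
  if same_side yl yr i j then avg2 i j xi else xi.

Lemma avg2_slack_other (R : numFieldType) (yl yr K : nat) (i j k : 'I_(K - 1))
    (xi : 'I_(K - 1) -> R) :
  k != i -> k != j -> avg2_slack yl yr i j xi k = xi k.
Proof. by rewrite /avg2_slack; case: ifP => // _; apply: avg2_other. Qed.

Section AveragedUpdate.
Variables (R : realType) (d K yl yr : nat) (x w : 'I_d -> R).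
Variables (th xi : 'I_(K - 1) -> R) (i j : 'I_(K - 1)).
Hypotheses (ylr : (yl <= yr)%N) (ij : (i < j)%N) (thji : th j < th i).

Lemma sum_avg2_slack :
  \sum_(k | in_It yl yr k) avg2_slack yl yr i j xi k =
  \sum_(k | in_It yl yr k) xi k.
Proof.
rewrite /avg2_slack; case: ifP => // /same_side_in_It /andP [Ii Ij].
by apply: sum_avg2; rewrite ?Ii ?Ij // neq_ltn ij.
Qed.

Hypothesis feas : paI_feasible yl yr x w th xi.

Lemma left_avg2 (k : 'I_(K - 1)) : in_left yl k ->
  1 - avg2_slack yl yr i j xi k <= dotv w x - avg2 i j th k.
Proof.
case: feas => hL _ lk.
have [_ mid_lt] := midf_lt thji.
have [? | ki] := eqVneq k i; first subst k.
  have Li := hL i lk; rewrite /avg2_slack avg2_l.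
  case: ifP => [/orP [/andP [_ lj] | /andP [ri _]] | _]; last by lra.
    by have Lj := hL j lj; rewrite avg2_l; lra.
  by have := in_left_notin_right ylr lk; rewrite ri.
have [? | kj] := eqVneq k j; first subst k.
  have li := in_left_le (ltnW ij) lk.
  have ss : same_side yl yr i j by rewrite /same_side li lk.
  rewrite /avg2_slack ss.
  by have Li := hL i li; have Lj := hL j lk; rewrite !avg2_r; lra.
by rewrite avg2_other // avg2_slack_other //; apply: hL.
Qed.

Lemma right_avg2 (k : 'I_(K - 1)) : in_right yr k ->
  dotv w x - avg2 i j th k <= -1 + avg2_slack yl yr i j xi k.
Proof.
case: feas => _ [hR _] rk.
have [mid_gt _] := midf_lt thji.
have [? | kj] := eqVneq k j; first subst k.
  have Rj := hR j rk; rewrite /avg2_slack avg2_r.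
  case: ifP => [/orP [/andP [_ lj] | /andP [ri _]] | _]; last by lra.
    by have := in_left_notin_right ylr lj; rewrite rk.
  by have Ri := hR i ri; rewrite avg2_r; lra.
have [? | ki] := eqVneq k i; first subst k.
  have rj := in_right_le (ltnW ij) rk.
  have ss : same_side yl yr i j by rewrite /same_side rk rj orbT.
  rewrite /avg2_slack ss.
  by have Ri := hR i rk; have Rj := hR j rj; rewrite !avg2_l; lra.
by rewrite avg2_other // avg2_slack_other //; apply: hR.
Qed.

Lemma avg2_slack_ge0 (k : 'I_(K - 1)) : in_It yl yr k ->
  0 <= avg2_slack yl yr i j xi k.
Proof.
case: feas => _ [_ hP] Ik; rewrite /avg2_slack.
case: ifP => [/same_side_in_It /andP [Ii Ij] | _]; last exact: hP.
rewrite /avg2; case: ifP => _; last exact: hP.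
by apply: divr_ge0 => //; apply: addr_ge0; apply: hP.
Qed.

Lemma paI_feasible_avg2 :
  paI_feasible yl yr x w (avg2 i j th) (avg2_slack yl yr i j xi).
Proof.
split; first exact: left_avg2.
by split; [exact: right_avg2 | exact: avg2_slack_ge0].
Qed.

End AveragedUpdate.

Theorem theorem2 (R : realType) (d K : nat) (C : R)
  (wt : 'I_d -> R) (tht : 'I_(K - 1) -> R) (x : 'I_d -> R) (yl yr : nat)
  (hC : 0 < C)
  (htht : forall i j : 'I_(K - 1), (i <= j)%N -> tht i <= tht j)
  (hyl : (1 <= yl)%N) (hylr : (yl <= yr)%N) (hyr : (yr <= K)%N)
  (w : 'I_d -> R) (th : 'I_(K - 1) -> R) (xi : 'I_(K - 1) -> R)
  (hmin : paI_minimizer C yl yr wt tht x w th xi) :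
  forall i j : 'I_(K - 1), (i <= j)%N -> th i <= th j.
Proof.
move=> i j ij; rewrite leNgt; apply/negP => thji.
have [eq_ij | neq_ij] := eqVneq i j; first by rewrite eq_ij ltxx in thji.
have {}ij : (i < j)%N by rewrite ltn_neqAle ij andbT.
case: hmin => feas opt.
have := opt w _ _ (paI_feasible_avg2 hylr ij thji feas).
have := sqdist_avg2_lt neq_ij thji (htht _ _ (ltnW ij)).
by rewrite /paI_obj sum_avg2_slack //; lra.
Qed.
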